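(* Let $G$ be a graph on $d+2$ vertices with adjacency matrix $A_G$ having eigenvalues $\lambda_1\geq\lambda_2\geq\dots\geq\lambda_{d+2}$, and let $k>1$ with $\overline{B_G}=\frac{1}{k^2-1}I-A_G$. Suppose that $w^T\overline{B_G}w\geq 0$ for all $w\in\mathbf{1}^\perp$, that there exist a nonzero $w\in\mathbf{1}^\perp$ and a real $\gamma$ with $\overline{B_G}w=\gamma\mathbf{1}$, and that $\det(\overline{B_G})=0$. Then there exists an eigenvector $v_2$ of $A_G$ with eigenvalue $\lambda_2$ that is orthogonal to $\mathbf{1}$.
   Context: Graphs are finite and simple; $\mathbf{1}$ is the all-ones vector and $\mathbf{1}^\perp$ its orthogonal complement. *)

From HB Require Import structures.
From mathcomp Require Import all_boot all_order all_algebra.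
From mathcomp Require Import reals.
Set Implicit Arguments. Unset Strict Implicit. Unset Printing Implicit Defensive.
Import Order.TTheory GRing.Theory Num.Theory.
Local Open Scope ring_scope.

Definition simple_graph (n : nat) (e : rel 'I_n) : Prop :=
  symmetric e /\ irreflexive e.

Definition adjmx (R : nzRingType) (n : nat) (e : rel 'I_n) : 'M[R]_n :=
  \matrix_(i, j) (e i j)%:R.

Definition ones (R : nzRingType) (n : nat) : 'cV[R]_n := const_mx 1.

Definition orth_ones (R : nzRingType) (n : nat) (w : 'cV[R]_n) : Prop :=
  (ones R n)^T *m w = 0.

Definition eigenvalues_desc (R : realType) (n : nat) (A : 'M[R]_n)
  (lam : seq R) : Prop :=
  sorted (>=%R) lam /\ char_poly A = \prod_(x <- lam) ('X - x%:P).

(* Write [c = 1/(k^2 - 1)], so [B = c - A].  Since [B] is symmetric and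
   singular, [B w = gamma 1] with [w] in [1^perp] yields a kernel vector [u] of
   [B] in [1^perp] (either [w] itself or, when [gamma <> 0], any kernel vector);
   thus [A u = c u].  The plane spanned by eigenvectors for [lambda_1] and
   [lambda_2] meets [1^perp], and on it the Rayleigh quotient is at least
   [lambda_2]; positivity of [B] on [1^perp] gives [lambda_2 <= c].  If
   [lambda_2 < c], then [c = lambda_1] is a simple top eigenvalue, so [c - A]
   is positive semidefinite; as [A] is entrywise nonnegative, [|u|] has
   Rayleigh quotient at least that of [u], hence is again a [c]-eigenvector
   and so a multiple of [u].  But a nonzero multiple of [|u|] cannot be
   orthogonal to [1].  Hence [lambda_2 = c] and [u] is the eigenvector sought. *)

From HB Require Import structures.
From mathcomp Require Import all_boot all_order all_algebra.
From mathcomp Require Import perm reals ring.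
Set Implicit Arguments. Unset Strict Implicit. Unset Printing Implicit Defensive.
Import Order.TTheory GRing.Theory Num.Theory.
Local Open Scope ring_scope.

Local Notation "''[' u , v ]" := ((u^T *m v) 0 0) : ring_scope.

Section DotProduct.
Variable R : realDomainType.

Lemma dotE n (u v : 'cV[R]_n) : '[u, v] = \sum_i u i 0 * v i 0.
Proof. by rewrite mxE; apply: eq_bigr => i _; rewrite mxE. Qed.

Lemma dotC n (u v : 'cV[R]_n) : '[u, v] = '[v, u].
Proof. by rewrite !dotE; apply: eq_bigr => i _; rewrite mulrC. Qed.

Lemma dotDr n (u v w : 'cV[R]_n) : '[u, v + w] = '[u, v] + '[u, w].
Proof. by rewrite mulmxDr mxE. Qed.

Lemma dotZr n (u v : 'cV[R]_n) a : '[u, a *: v] = a * '[u, v].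
Proof. by rewrite -scalemxAr mxE. Qed.

Lemma dotDl n (u v w : 'cV[R]_n) : '[u + v, w] = '[u, w] + '[v, w].
Proof. by rewrite linearD mulmxDl mxE. Qed.

Lemma dotZl n (u v : 'cV[R]_n) a : '[a *: u, v] = a * '[u, v].
Proof. by rewrite linearZ -scalemxAl mxE. Qed.

Lemma orth_onesP n (x : 'cV[R]_n) : orth_ones x <-> '[ones R n, x] = 0.
Proof.
split => [->|x0]; first by rewrite mxE.
by apply/matrixP => i j; rewrite !ord1 x0 mxE.
Qed.

Lemma dot_ge0 n (u : 'cV[R]_n) : 0 <= '[u, u].
Proof. by rewrite dotE sumr_ge0 // => i _; rewrite -expr2 sqr_ge0. Qed.

Lemma dot_eq0 n (u : 'cV[R]_n) : ('[u, u] == 0) = (u == 0).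
Proof.
apply/idP/eqP => [|->]; last by rewrite trmx0 mul0mx mxE.
rewrite dotE psumr_eq0 => [/allP u0|i _]; last by rewrite -expr2 sqr_ge0.
apply/matrixP => i j; rewrite ord1 mxE.
by have /implyP/(_ isT) := u0 i (mem_index_enum _); rewrite mulf_eq0 orbb => /eqP.
Qed.

Lemma trmx_mul_eq0 n (M : 'M[R]_n) : M^T *m M = 0 -> M = 0.
Proof.
move=> MM0; apply/matrixP => i j; rewrite mxE.
have /eqP : '[col j M, col j M] = 0.
  have -> : 0 = (M^T *m M) j j by rewrite MM0 mxE.
  by rewrite !mxE; apply: eq_bigr => k _; rewrite !mxE.
by rewrite dot_eq0 => /eqP/matrixP/(_ i 0); rewrite !mxE.
Qed.

Lemma dot_norm n (u : 'cV[R]_n) :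
  '[map_mx Num.norm u, map_mx Num.norm u] = '[u, u].
Proof.
rewrite !dotE; apply: eq_bigr => i _.
by rewrite !mxE -!expr2 real_normK ?num_real.
Qed.

Lemma dot_norm_le n (A : 'M[R]_n) (u : 'cV[R]_n) : (forall i j, 0 <= A i j) ->
  '[u, A *m u] <= '[map_mx Num.norm u, A *m map_mx Num.norm u].
Proof.
move=> A_ge0; rewrite !dotE; apply: ler_sum => i _; rewrite !mxE !mulr_sumr.
apply: ler_sum => k _; rewrite !mxE mulrCA [X in _ <= X]mulrCA.
by rewrite ler_wpM2l // -normrM ler_norm.
Qed.

Lemma dot_ones_norm_eq0 n (u : 'cV[R]_n) :
  '[ones R n, map_mx Num.norm u] = 0 -> u = 0.
Proof.
rewrite dotE => /eqP; rewrite psumr_eq0 => [/allP u0|i _]; last by rewrite !mxE mul1r.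
apply/matrixP => i j; rewrite ord1 mxE.
have /implyP/(_ isT) := u0 i (mem_index_enum _).
by rewrite !mxE mul1r normr_eq0 => /eqP.
Qed.

Lemma rayleigh_max_eigen n (A S : 'M[R]_n) c (x : 'cV[R]_n) :
  c%:M - A = S^T *m S -> c * '[x, x] <= '[x, A *m x] -> A *m x = c *: x.
Proof.
move=> AS le_cA.
have : '[S *m x, S *m x] == 0.
  rewrite eq_le dot_ge0 andbT trmx_mul -mulmxA (mulmxA S^T) -AS mulmxBl mul_scalar_mx.
  have -> : (x^T *m (c *: x - A *m x)) 0 0 = c * '[x, x] - '[x, A *m x].
    by rewrite mulmxBr -scalemxAr !mxE.
  by rewrite subr_le0.
rewrite dot_eq0 => /eqP Sx0; apply/eqP; rewrite eq_sym -subr_eq0.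
by rewrite -mul_scalar_mx -mulmxBl AS -mulmxA Sx0 mulmx0.
Qed.

End DotProduct.

Lemma char_poly_similar (F : comUnitRingType) n (P A D : 'M[F]_n) :
  P \in unitmx -> P *m A = D *m P -> char_poly A = char_poly D.
Proof.
move=> Pu PA; have {PA}-> : A = invmx P *m D *m P by rewrite -mulmxA -PA mulKmx.
set Q := map_mx polyC P; set Qi := map_mx polyC (invmx P).
have QiQ : Qi *m Q = 1%:M by rewrite -map_mxM mulVmx // map_mx1.
have QQi : Q *m Qi = 1%:M by rewrite -map_mxM mulmxV // map_mx1.
rewrite /char_poly.
have -> : char_poly_mx (invmx P *m D *m P) = Qi *m char_poly_mx D *m Q.
  rewrite /char_poly_mx mulmxBr mulmxBl !map_mxM -!mulmxA.
  by rewrite mul_scalar_mx -scalemxAr QiQ scalemx1.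
by rewrite !det_mulmx mulrC mulrA -det_mulmx QQi det1 mul1r.
Qed.

Lemma dvdp_prod_XsubC_exp (F : idomainType) (s t : seq F) : {subset s <= t} ->
  \prod_(x <- s) ('X - x%:P) %| (\prod_(x <- t) ('X - x%:P)) ^+ size s.
Proof.
elim: s => [|a s IHs] st; first by rewrite big_nil dvd1p.
rewrite big_cons exprS dvdp_mul //.
  by rewrite dvdp_XsubCl root_prod_XsubC st ?mem_head.
by apply: IHs => x xs; rewrite st // inE xs orbT.
Qed.

Section SymmetricDiagonalization.
Variable R : realFieldType.

Lemma sym_horner_mx n (A : 'M[R]_n.+1) (p : {poly R}) :
  A^T = A -> (horner_mx A p)^T = horner_mx A p.
Proof.
move=> symA; elim/poly_ind: p => [|p c IHp]; first by rewrite rmorph0 trmx0.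
rewrite rmorphD rmorphM /= horner_mx_X horner_mx_C linearD /= tr_scalar_mx.
rewrite -mulmxE trmx_mul IHp symA; congr (_ + _).
by have := comm_horner_mx p (erefl (A *m A)).
Qed.

Lemma sym_nilpotent_eq0 n (A : 'M[R]_n.+1) k : A^T = A -> A ^+ k.+1 = 0 -> A = 0.
Proof.
move=> symA; elim: k => [|k IHk Ak0]; first by rewrite expr1.
apply/IHk/trmx_mul_eq0.
have -> : (A ^+ k.+1)^T = A ^+ k.+1.
  by have := @sym_horner_mx _ A ('X ^+ k.+1) symA; rewrite rmorphXn /= horner_mx_X.
by rewrite mulmxE -exprD addSn -addnS exprD Ak0 mulr0.
Qed.

(* The squarefree part [p] of the characteristic polynomial annihilates [A]:
   [p(A)] is symmetric and nilpotent, hence zero. *)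
Lemma sym_diagonalizable n (A : 'M[R]_n.+1) (lam : seq R) : A^T = A ->
  char_poly A = \prod_(x <- lam) ('X - x%:P) -> diagonalizable A.
Proof.
move=> symA charA; apply/diagonalizableP; exists (undup lam); first exact: undup_uniq.
apply: mxminpoly_min; set p := \prod_(x <- _) _.
have sz_lam : size lam = n.+1.
  by have := size_char_poly A; rewrite charA size_prod_XsubC => -[].
apply: (@sym_nilpotent_eq0 _ _ n); first exact: sym_horner_mx.
rewrite -rmorphXn /=.
have /dvdpP [q ->] : char_poly A %| p ^+ n.+1.
  by rewrite charA -sz_lam dvdp_prod_XsubC_exp // => x; rewrite mem_undup.
by rewrite rmorphM /= Cayley_Hamilton mulr0.
Qed.

Lemma sym_eigenbasis n (A : 'M[R]_n.+1) (lam : seq R) : A^T = A ->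
  char_poly A = \prod_(x <- lam) ('X - x%:P) ->
  exists2 Q : 'M_n.+1, Q \in unitmx & A *m Q = Q *m diag_mx (\row_j lam`_j).
Proof.
move=> symA charA.
have [P Pu /similar_diagPex [D /(similarP Pu) PA]] := sym_diagonalizable symA charA.
have lamD : perm_eq lam [tuple D 0 j | j < n.+1].
  apply: prod_XsubC_eq; rewrite -charA (char_poly_similar Pu PA).
  rewrite char_poly_trig ?diag_mx_is_trig //= big_map big_enum /=.
  by apply: eq_bigr => j _; rewrite mxE eqxx mulr1n.
have [s lamE] := tuple_permP lamD.
exists (col_perm s P^T); first by rewrite col_permE unitmx_mul unitmx_perm unitmx_tr Pu.
have AP : A *m P^T = P^T *m diag_mx D.
  by rewrite -{1}symA -trmx_mul PA trmx_mul tr_diag_mx.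
apply/matrixP => i j; rewrite mul_mx_diag !mxE.
transitivity ((A *m P^T) i (s j)).
  by rewrite !mxE; apply: eq_bigr => k _; rewrite !mxE.
rewrite AP mul_mx_diag lamE !mxE (nth_map ord0) ?size_enum_ord //.
by rewrite nth_ord_enum tnth_mktuple.
Qed.

End SymmetricDiagonalization.

Section SymmetricEigenbasis.
Variable R : realFieldType.
Variables (n : nat) (A : 'M[R]_n).
Hypothesis symA : A^T = A.

Lemma dot_mulmxl (u v : 'cV[R]_n) : '[A *m u, v] = '[u, A *m v].
Proof. by rewrite trmx_mul symA mulmxA. Qed.

Lemma sym_eigen_orthogonal (u v : 'cV[R]_n) a b :
  A *m u = a *: u -> A *m v = b *: v -> (a - b) * '[u, v] = 0.
Proof.
move=> Au Av; have := dot_mulmxl u v.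
by rewrite Au Av dotZl dotZr mulrBl => ->; rewrite subrr.
Qed.

Lemma rayleigh_pair_ge (u v : 'cV[R]_n) a b s t : let x := s *: u + t *: v in
  A *m u = a *: u -> A *m v = b *: v -> b <= a -> b * '[x, x] <= '[x, A *m x].
Proof.
move=> x Au Av ba; have uv0 := sym_eigen_orthogonal Au Av.
have Ax : A *m x = b *: x + (s * (a - b)) *: u.
  rewrite mulmxDr -!scalemxAr Au Av !scalerA scalerDr !scalerA addrAC -scalerDl.
  by congr (_ + _); congr (_ *: _); ring.
have xu : '[x, u] = s * '[u, u] + t * '[u, v] by rewrite dotDl !dotZl (dotC v).
clearbody x; rewrite Ax dotDr !dotZr xu lerDl.
have -> : s * (a - b) * (s * '[u, u] + t * '[u, v]) =
          s ^+ 2 * ((a - b) * '[u, u]) + s * t * ((a - b) * '[u, v]) by ring.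
by rewrite uv0 mulr0 addr0 mulr_ge0 ?sqr_ge0 ?mulr_ge0 ?subr_ge0 ?dot_ge0.
Qed.

Variables (Q : 'M[R]_n) (d : 'rV[R]_n).
Hypotheses (Qu : Q \in unitmx) (AQ : A *m Q = Q *m diag_mx d).

Lemma eigenbasis_col j : A *m col j Q = d 0 j *: col j Q.
Proof.
apply/matrixP => i k; rewrite ord1 !mxE.
have := congr1 (fun M : 'M_n => M i j) AQ; rewrite mul_mx_diag !mxE mulrC => <-.
by apply: eq_bigr => l _; rewrite !mxE.
Qed.

Lemma eigen_coord_eq0 (v : 'cV[R]_n) mu i :
  A *m v = mu *: v -> d 0 i != mu -> (invmx Q *m v) i 0 = 0.
Proof.
move=> Av dmu; set a := invmx Q *m v.
have vQa : v = Q *m a by rewrite mulKVmx.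
have /matrixP/(_ i 0) : diag_mx d *m a = mu *: a.
  by rewrite -[LHS](mulKmx Qu) (mulmxA Q) -AQ -mulmxA -vQa Av -scalemxAr.
rewrite mul_diag_mx !mxE => /eqP; rewrite -subr_eq0 -mulrBl mulf_eq0 subr_eq0.
by move/negPf: dmu => -> /eqP.
Qed.

Lemma eigenvector_simple (v : 'cV[R]_n) mu i : A *m v = mu *: v ->
  (forall j, j != i -> d 0 j != mu) -> v = (invmx Q *m v) i 0 *: col i Q.
Proof.
move=> Av dmu; set a := invmx Q *m v.
have aE : a = a i 0 *: delta_mx i 0.
  apply/matrixP => j k; rewrite ord1 [in RHS]mxE [delta_mx i 0 j 0]mxE eqxx andbT.
  have [->|ji] := eqVneq j i; first by rewrite mulr1.
  by rewrite mulr0 /a (eigen_coord_eq0 Av) ?dmu.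
by rewrite -[v in LHS](mulKVmx Qu) -/a {1}aE -scalemxAr -colE.
Qed.

Lemma eigenvalue_of_eigenvector (v : 'cV[R]_n) mu :
  v != 0 -> A *m v = mu *: v -> exists i, d 0 i = mu.
Proof.
move=> v0 Av; case: (pickP (fun i => d 0 i == mu)) => [i /eqP| dmu]; first by exists i.
have a0 : invmx Q *m v = 0.
  by apply/matrixP => i k; rewrite ord1 [RHS]mxE (eigen_coord_eq0 Av) ?dmu.
by move: v0; rewrite -(mulKVmx Qu v) a0 mulmx0 eqxx.
Qed.

Lemma eigenbasis_col_free i j s t :
  i != j -> s *: col i Q + t *: col j Q = 0 -> s = 0 /\ t = 0.
Proof.
move=> ij /(congr1 (mulmx (invmx Q))).
rewrite mulmx0 mulmxDr -!scalemxAr !colE !mulKmx // => /matrixP E.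
have := E i 0; have := E j 0; rewrite !mxE !eqxx (negPf ij) eq_sym (negPf ij) /=.
by rewrite !mulr1 !mulr0 addr0 add0r => -> ->.
Qed.

Lemma second_eigen_le c i j : i != j -> d 0 j <= d 0 i ->
  (forall x, orth_ones x -> '[x, A *m x] <= c * '[x, x]) -> d 0 j <= c.
Proof.
move=> ij dji rayleigh; set qi := col i Q; set qj := col j Q.
set a := '[ones R n, qi]; set b := '[ones R n, qj].
have [s [t [st0 orth_st]]] : exists s t, ((s != 0) || (t != 0)) /\ s * a + t * b = 0.
  have [/andP [/eqP -> /eqP ->]|ab] := boolP ((a == 0) && (b == 0)).
    by exists 1, 0; rewrite oner_neq0 !mulr0 addr0.
  by exists b, (- a); rewrite oppr_eq0 orbC -negb_and ab mulNr mulrC subrr.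
set x := s *: qi + t *: qj.
have x_orth : orth_ones x by apply/orth_onesP; rewrite dotDr !dotZr.
have x0 : x != 0.
  by apply: contraTneq st0 => /(eigenbasis_col_free ij) [-> ->]; rewrite eqxx.
have := rayleigh_pair_ge s t (eigenbasis_col i) (eigenbasis_col j) dji.
rewrite -/x => /le_trans /(_ (rayleigh x x_orth)).
by rewrite ler_pM2r // lt_def dot_eq0 x0 dot_ge0.
Qed.

Lemma gram_diag_comm (f : R -> R) (D := diag_mx (\row_j f (d 0 j))) :
  Q^T *m Q *m D = D *m (Q^T *m Q).
Proof.
have G0 i k : d 0 i != d 0 k -> (Q^T *m Q) i k = 0.
  move=> dik; have := sym_eigen_orthogonal (eigenbasis_col i) (eigenbasis_col k).
  rewrite dotE => /eqP; rewrite mulf_eq0 subr_eq0 (negPf dik) /= => /eqP <-.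
  by rewrite mxE; apply: eq_bigr => l _; rewrite !mxE.
apply/matrixP => i k; rewrite mul_mx_diag mul_diag_mx [LHS]mxE [RHS]mxE.
have [dik|/G0 ->] := eqVneq (d 0 i) (d 0 k); last by rewrite mulr0 mul0r.
by rewrite !mxE dik mulrC.
Qed.

Lemma eigen_fun_sym (f : R -> R) (S := Q *m diag_mx (\row_j f (d 0 j)) *m invmx Q) :
  S^T = S.
Proof.
have QTu : Q^T \in unitmx by rewrite unitmx_tr.
apply: (can_inj (mulKmx QTu)); rewrite /S !trmx_mul tr_diag_mx trmx_inv mulKVmx //.
by rewrite !mulmxA gram_diag_comm -!mulmxA mulmxV // mulmx1.
Qed.

End SymmetricEigenbasis.

Section PositiveSemidefinite.
Variable R : rcfType.
Variables (n : nat) (A Q : 'M[R]_n) (d : 'rV[R]_n).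
Hypotheses (symA : A^T = A) (Qu : Q \in unitmx) (AQ : A *m Q = Q *m diag_mx d).

Lemma eigen_le_psd c : (forall j, d 0 j <= c) -> exists S : 'M_n, c%:M - A = S^T *m S.
Proof.
move=> dc; set s := \row_j Num.sqrt (c - d 0 j).
have ss : diag_mx s *m diag_mx s = c%:M - diag_mx d.
  rewrite mulmx_diag; apply/matrixP => i k.
  by rewrite !mxE -expr2 sqr_sqrtr ?subr_ge0 // mulrnBl.
set S := Q *m diag_mx s *m invmx Q.
have S_sym : S^T = S := eigen_fun_sym symA Qu AQ (fun x => Num.sqrt (c - x)).
exists S; rewrite S_sym /S -!mulmxA (mulmxA (invmx Q) Q) mulVmx // mul1mx.
rewrite (mulmxA (diag_mx s)) ss mulmxBl mulmxBr mul_scalar_mx -scalemxAr mulmxV //.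
by rewrite scalemx1 mulmxA -AQ mulmxK.
Qed.

Lemma simple_top_eigenvector_orth_ones i (u : 'cV[R]_n) :
  (forall j k, 0 <= A j k) -> (forall j, j != i -> d 0 j < d 0 i) ->
  A *m u = d 0 i *: u -> orth_ones u -> u = 0.
Proof.
move=> A_ge0 d_lt Au /orth_onesP u_orth; set c := d 0 i in Au.
have [S AS] : exists S : 'M_n, c%:M - A = S^T *m S.
  apply: eigen_le_psd => j; have [->//|/d_lt/ltW//] := eqVneq j i.
set au := map_mx Num.norm u.
have Aau : A *m au = c *: au.
  by apply: rayleigh_max_eigen AS _; rewrite dot_norm -dotZr -Au dot_norm_le.
have d_neq j : j != i -> d 0 j != c by move/d_lt; rewrite lt_neqAle => /andP[].
have uE := eigenvector_simple Qu AQ Au d_neq.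
have auE := eigenvector_simple Qu AQ Aau d_neq.
set a := (invmx Q *m u) i 0 in uE.
have [a0|a_neq0] := eqVneq a 0; first by rewrite uE a0 scale0r.
apply: dot_ones_norm_eq0; rewrite -/au auE.
by rewrite -[col i Q](scalerK a_neq0) -uE !dotZr u_orth !mulr0.
Qed.

End PositiveSemidefinite.

Lemma sym_singular_orth_kernel (F : fieldType) n (B : 'M[F]_n) (z w : 'cV[F]_n) g :
  B^T = B -> \det B = 0 -> w != 0 -> z^T *m w = 0 -> B *m w = g *: z ->
  exists2 u : 'cV_n, u != 0 & z^T *m u = 0 /\ B *m u = 0.
Proof.
move=> symB detB w0 zw Bw; have [g0|g0] := eqVneq g 0.
  by exists w; rewrite // Bw g0 scale0r.
have /det0P [v v0 vB] : \det B == 0 by apply/eqP.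
exists v^T; first by rewrite trmx_eq0.
split; last by rewrite -symB -trmx_mul vB trmx0.
have /eqP : v *m (B *m w) = 0 by rewrite mulmxA vB mul0mx.
rewrite Bw -scalemxAr scaler_eq0 (negPf g0) => /eqP vz.
by rewrite -trmx_mul vz trmx0.
Qed.

Lemma sorted_ge_nth (R : numDomainType) (s : seq R) i j :
  sorted >=%R s -> (i <= j < size s)%N -> s`_j <= s`_i.
Proof.
move=> s_sorted /andP [ij js].
have ge_trans : transitive (>=%R : rel R) by move=> ? ? ? /[swap]; apply: le_trans.
apply: (sorted_leq_nth ge_trans lexx 0 s_sorted) => //.
by rewrite inE (leq_ltn_trans ij).
Qed.

Lemma second_eigenvalue_eq (R : rcfType) n (A : 'M[R]_n.+2) (lam : seq R) c u :
  A^T = A -> (forall i j, 0 <= A i j) ->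
  sorted >=%R lam -> char_poly A = \prod_(x <- lam) ('X - x%:P) ->
  (forall x, orth_ones x -> '[x, A *m x] <= c * '[x, x]) ->
  u != 0 -> orth_ones u -> A *m u = c *: u -> lam`_1 = c.
Proof.
move=> symA A_ge0 lam_sorted charA rayleigh u0 u_orth Au.
have [Q Qu AQ] := sym_eigenbasis symA charA.
have lam_le i j : (i <= j < n.+2)%N -> lam`_j <= lam`_i.
  have := size_char_poly A; rewrite charA size_prod_XsubC => -[<-].
  exact: sorted_ge_nth.
have lam1_le_c : lam`_1 <= c.
  have := second_eigen_le symA Qu AQ (i := ord0) (j := Ordinal (isT : 1 < n.+2)%N).
  by rewrite !mxE; apply=> //; apply: lam_le.
apply/eqP; rewrite eq_le lam1_le_c leNgt; apply/negP => lam1_lt_c.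
have [i di] := eigenvalue_of_eigenvector Qu AQ u0 Au.
have i0 : i = ord0.
  apply/eqP; apply: contraTT lam1_lt_c => i0.
  by rewrite -leNgt -di mxE lam_le // lt0n i0 /=.
rewrite {}i0 in di; move/eqP: u0; apply.
apply: (simple_top_eigenvector_orth_ones symA Qu AQ A_ge0 (i := ord0)); rewrite ?di //.
move=> j j0; rewrite mxE; apply: le_lt_trans lam1_lt_c.
by rewrite lam_le // lt0n j0 /=.
Qed.

Theorem lemma4p4 (R : realType) (d : nat) (e : rel 'I_(d.+2))
  (lam : seq R) (k : R) :
  simple_graph e ->
  eigenvalues_desc (adjmx R e) lam ->
  1 < k ->
  let B := ((k ^+ 2 - 1)^-1)%:M - adjmx R e in
  (forall w : 'cV[R]_(d.+2), orth_ones w -> 0 <= (w^T *m B *m w) 0 0) ->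
  (exists w : 'cV[R]_(d.+2), [/\ w != 0, orth_ones w &
      exists gamma : R, B *m w = gamma *: ones R d.+2]) ->
  \det B = 0 ->
  exists v2 : 'cV[R]_(d.+2),
    [/\ v2 != 0, adjmx R e *m v2 = lam`_1 *: v2 & orth_ones v2].
Proof.
move=> [symE _] [lam_sorted charA] _ B B_psd [w [w0 w_orth [g Bw]]] detB.
set A := adjmx R e in B B_psd Bw detB *; set c := (k ^+ 2 - 1)^-1 in B B_psd Bw detB.
have symA : A^T = A by apply/matrixP => i j; rewrite !mxE symE.
have A_ge0 i j : 0 <= A i j by rewrite mxE ler0n.
have rayleigh x : orth_ones x -> '[x, A *m x] <= c * '[x, x].
  move=> /B_psd; have -> : (x^T *m B *m x) 0 0 = c * '[x, x] - '[x, A *m x].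
    by rewrite /B mulmxBr mulmxBl mul_mx_scalar -scalemxAl -mulmxA !mxE.
  by rewrite subr_ge0.
have symB : B^T = B by rewrite /B linearB /= tr_scalar_mx symA.
have [u u0 [u_orth /eqP]] := sym_singular_orth_kernel symB detB w0 w_orth Bw.
rewrite /B mulmxBl mul_scalar_mx subr_eq0 eq_sym => /eqP Au.
exists u; split=> //.
by rewrite (second_eigenvalue_eq symA A_ge0 lam_sorted charA rayleigh u0 u_orth Au).
Qed.
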